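(* Let $H\in C^\infty(\mathbb{R}^2)$ be convex and let $U\subset\mathbb{R}^2$ be a domain. For every $v\in C^\infty(U)$, $$\langle D^2_{pp}H(Dv)D[H(Dv)],D[H(Dv)]\rangle-\operatorname{div}[D_pH(Dv)]\,\mathscr A_H[v]=(-\det D^2v)\langle[D^2_{pp}H(Dv)]^*D_pH(Dv),D_pH(Dv)\rangle\quad\text{in }U.$$
   Context: $\mathscr A_H[v]:=\sum_{i,j=1}^2H_{p_i}(Dv)H_{p_j}(Dv)v_{x_ix_j}$. For a $2\times2$ matrix $A=(a_{ij})$, $A^*$ is its adjugate $\begin{pmatrix}a_{22}&-a_{21}\\-a_{12}&a_{11}\end{pmatrix}$. *)

From Stdlib Require Import Reals List.
From Coquelicot Require Import Coquelicot.
Open Scope R_scope.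

Inductive dir := X1 | X2.

Definition pd (i : dir) (f : R -> R -> R) : R -> R -> R :=
  match i with
  | X1 => fun x y => Derive (fun t => f t y) x
  | X2 => fun x y => Derive (fun t => f x t) y
  end.

Definition iter_pd (l : list dir) (f : R -> R -> R) : R -> R -> R :=
  fold_right pd f l.

Definition smooth_on (U : R -> R -> Prop) (f : R -> R -> R) : Prop :=
  forall (l : list dir) (x y : R), U x y ->
    ex_derive (fun t => iter_pd l f t y) x /\
    ex_derive (fun t => iter_pd l f x t) y /\
    continuity_2d_pt (iter_pd l f) x y.

Definition convex2 (H : R -> R -> R) : Prop :=
  forall x1 y1 x2 y2 t, 0 <= t <= 1 ->
    H (t * x1 + (1 - t) * x2) (t * y1 + (1 - t) * y2)
      <= t * H x1 y1 + (1 - t) * H x2 y2.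

Definition as_set (U : R -> R -> Prop) : R * R -> Prop :=
  fun p => U (fst p) (snd p).

(** A domain: nonempty, open, connected subset of R^2. *)
Definition is_domain (U : R -> R -> Prop) : Prop :=
  (exists x y, U x y) /\
  open (as_set U) /\
  (forall A B : R * R -> Prop, open A -> open B ->
     (forall p, as_set U p -> A p \/ B p) ->
     (forall p, as_set U p -> A p -> B p -> False) ->
     (forall p, as_set U p -> ~ A p) \/ (forall p, as_set U p -> ~ B p)).

Definition sum2 (f : dir -> R) : R := f X1 + f X2.
Definition inner (u w : dir -> R) : R := sum2 (fun i => u i * w i).
Definition mulv (B : dir -> dir -> R) (u : dir -> R) : dir -> R :=
  fun i => sum2 (fun j => B i j * u j).
Definition det2 (A : dir -> dir -> R) : R :=
  A X1 X1 * A X2 X2 - A X1 X2 * A X2 X1.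
Definition adj2 (A : dir -> dir -> R) : dir -> dir -> R :=
  fun i j => match i, j with
  | X1, X1 => A X2 X2
  | X1, X2 => - A X2 X1
  | X2, X1 => - A X1 X2
  | X2, X2 => A X1 X1
  end.

Definition grad (f : R -> R -> R) (x y : R) : dir -> R := fun i => pd i f x y.
Definition hess (f : R -> R -> R) (x y : R) : dir -> dir -> R :=
  fun i j => pd j (pd i f) x y.

Definition comp_Dv (H v : R -> R -> R) : R -> R -> R :=
  fun a b => H (pd X1 v a b) (pd X2 v a b).

Definition DpH_Dv (H v : R -> R -> R) : dir -> R -> R -> R :=
  fun i => comp_Dv (pd i H) v.

Definition divergence (F : dir -> R -> R -> R) (x y : R) : R :=
  sum2 (fun i => pd i (F i) x y).

Definition AH (H v : R -> R -> R) (x y : R) : R :=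
  sum2 (fun i => sum2 (fun j =>
    DpH_Dv H v i x y * DpH_Dv H v j x y * hess v x y i j)).

From Stdlib Require Import Reals Lra Psatz FunctionalExtensionality.
From Coquelicot Require Import Coquelicot.
Open Scope R_scope.

(* By the chain rule, with g := D_pH(Dv), A := D^2_ppH(Dv) and W := D^2v,
   D[H(Dv)] = W g, div[D_pH(Dv)] = tr(A W) and A_H[v] = <W g, g>, so the claim
   is the pointwise algebraic identity
     <A W g, W g> - tr(A W) <W g, g> = - det W <A^* g, g>.
   For 2x2 matrices M^* = tr(M) I - M and (M N)^* = N^* M^*, hence
   W A W - tr(A W) W = -(W A)^* W = - A^* W^* W = - det W A^*. *)

Definition trace2 (A : dir -> dir -> R) : R := sum2 (fun i => A i i).

Definition mulmx2 (A B : dir -> dir -> R) : dir -> dir -> R :=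
  fun i j => sum2 (fun k => A i k * B k j).

Lemma quadratic_form_identity (A W : dir -> dir -> R) (g : dir -> R) :
  W X1 X2 = W X2 X1 ->
  inner (mulv A (mulv W g)) (mulv W g) - trace2 (mulmx2 A W) * inner (mulv W g) g
  = - det2 W * inner (mulv (adj2 A) g) g.
Proof.
intros Wsym; unfold inner, mulv, trace2, mulmx2, det2, adj2, sum2.
rewrite Wsym; ring.
Qed.

Lemma smooth_on_ex_diff_n (U : R -> R -> Prop) (f : R -> R -> R) :
  smooth_on U f -> forall n l x y, U x y -> ex_diff_n (iter_pd l f) n x y.
Proof.
intros Hf n; induction n as [|n IH]; intros l x y Uxy;
  destruct (Hf l x y Uxy) as [dx [dy cont]]; simpl.
- split; [exact cont | exact I].
- repeat split; try assumption.
  + exact (IH (cons X1 l) x y Uxy).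
  + exact (IH (cons X2 l) x y Uxy).
Qed.

Lemma smooth_on_locally_ex_diff_n (U : R -> R -> Prop) (f : R -> R -> R) n x y :
  open (as_set U) -> smooth_on U f -> U x y -> locally_2d (ex_diff_n f n) x y.
Proof.
intros Uopen Hf Uxy.
apply locally_2d_locally.
apply (filter_imp (as_set U)); [| exact (Uopen (x, y) Uxy)].
intros [a b] Uab; exact (smooth_on_ex_diff_n U f Hf n nil a b Uab).
Qed.

Lemma hess_sym (f : R -> R -> R) x y :
  locally_2d (ex_diff_n f 2) x y -> hess f x y X1 X2 = hess f x y X2 X1.
Proof.
intros Hf; symmetry.
exact (Derive_partial_derive_aux1 1 f x y Hf).
Qed.

(* Taylor-Lagrange at order 1 bounds the linearization error by D m^2, where
   m is the sup-distance; take m < eps / (|D| + 1). *)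
Lemma C2_differentiable_pt_lim (f : R -> R -> R) x y :
  locally_2d (ex_diff_n f 2) x y ->
  differentiable_pt_lim f x y (pd X1 f x y) (pd X2 f x y).
Proof.
intros Hf eps.
destruct (Taylor_Lagrange_2d f 1 x y Hf) as [D [d Hd]].
pose proof (Rabs_pos D) as D_ge0.
assert (r_pos : 0 < Rmin d (eps / (Rabs D + 1))).
{ apply Rmin_pos; [apply cond_pos |].
  apply Rdiv_lt_0_compat; [apply cond_pos | lra]. }
exists (mkposreal _ r_pos); simpl; intros u v Hu Hv.
set (m := Rmax (Rabs (u - x)) (Rabs (v - y))).
assert (m_ge0 : 0 <= m) by (unfold m; eapply Rle_trans; [apply Rabs_pos | apply Rmax_l]).
assert (m_small : m * (Rabs D + 1) <= eps).
{ assert (m_lt : m < eps / (Rabs D + 1)).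
  { apply Rmax_lub_lt; eapply Rlt_le_trans; eauto; apply Rmin_r. }
  apply Rlt_le; apply (Rmult_lt_compat_r (Rabs D + 1)) in m_lt; [| lra].
  unfold Rdiv in m_lt; rewrite Rmult_assoc, Rinv_l in m_lt; lra. }
specialize (Hd u v (Rlt_le_trans _ _ _ Hu (Rmin_l _ _))
                   (Rlt_le_trans _ _ _ Hv (Rmin_l _ _))).
unfold DL_pol, differential, Binomial.C, partial_derive in Hd; simpl in Hd.
fold m in Hd.
match type of Hd with Rabs ?e <= _ =>
  match goal with |- Rabs ?l <= _ => replace l with e by field end end.
eapply Rle_trans; [exact Hd |].
pose proof (Rle_abs D); nra.
Qed.

Lemma Derive_comp_2d (g : R -> R -> R) (f1 f2 : R -> R) t lx ly :
  differentiable_pt_lim g (f1 t) (f2 t) lx ly ->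
  ex_derive f1 t -> ex_derive f2 t ->
  Derive (fun s => g (f1 s) (f2 s)) t = Derive f1 t * lx + Derive f2 t * ly.
Proof.
intros Dg d1 d2.
rewrite (Rmult_comm _ lx), (Rmult_comm _ ly).
apply is_derive_unique, is_derive_Reals, derivable_pt_lim_comp_2d;
  [exact Dg | apply is_derive_Reals, Derive_correct ..]; assumption.
Qed.

Section ChainRule.

Variables (g v : R -> R -> R) (x y : R).
Hypothesis g_C2 : locally_2d (ex_diff_n g 2) (pd X1 v x y) (pd X2 v x y).
Hypothesis v_C2 : locally_2d (ex_diff_n v 2) x y.

Lemma pd_comp_Dv (i : dir) :
  pd i (comp_Dv g v) x y
  = sum2 (fun k => hess v x y k i * pd k g (pd X1 v x y) (pd X2 v x y)).
Proof.
assert (v2 : ex_diff_n v 2 x y) by exact (locally_2d_singleton _ _ _ v_C2).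
destruct v2 as [_ [_ [_ [[_ [d11 [d12 _]]] [_ [d21 [d22 _]]]]]]].
pose proof (C2_differentiable_pt_lim g _ _ g_C2) as Dg.
unfold sum2, hess; destruct i.
- exact (Derive_comp_2d g _ _ x _ _ Dg d11 d21).
- exact (Derive_comp_2d g _ _ y _ _ Dg d12 d22).
Qed.

Lemma grad_comp_Dv :
  grad (comp_Dv g v) x y = mulv (hess v x y) (grad g (pd X1 v x y) (pd X2 v x y)).
Proof.
extensionality i; unfold grad at 1; rewrite pd_comp_Dv.
pose proof (hess_sym v x y v_C2) as Wsym.
unfold mulv, grad, sum2; destruct i; rewrite Wsym; reflexivity.
Qed.

End ChainRule.

Lemma ex_diff_n_pd (f : R -> R -> R) (i : dir) n x y :
  ex_diff_n f (S n) x y -> ex_diff_n (pd i f) n x y.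
Proof. intros [_ [_ [_ [dx dy]]]]; destruct i; assumption. Qed.

Lemma locally_ex_diff_n_pd (f : R -> R -> R) (i : dir) n x y :
  locally_2d (ex_diff_n f (S n)) x y -> locally_2d (ex_diff_n (pd i f) n) x y.
Proof.
apply locally_2d_impl, locally_2d_forall; intros a b; apply ex_diff_n_pd.
Qed.

Lemma divergence_DpH_Dv (H v : R -> R -> R) x y :
  locally_2d (ex_diff_n H 3) (pd X1 v x y) (pd X2 v x y) ->
  locally_2d (ex_diff_n v 2) x y ->
  divergence (DpH_Dv H v) x y
  = trace2 (mulmx2 (hess H (pd X1 v x y) (pd X2 v x y)) (hess v x y)).
Proof.
intros H_C3 v_C2; unfold divergence, DpH_Dv, sum2.
rewrite !(pd_comp_Dv _ v x y (locally_ex_diff_n_pd H _ 2 _ _ H_C3) v_C2).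
unfold trace2, mulmx2, sum2, hess; ring.
Qed.

Lemma AH_eq_inner (H v : R -> R -> R) x y :
  AH H v x y
  = inner (mulv (hess v x y) (grad H (pd X1 v x y) (pd X2 v x y)))
          (grad H (pd X1 v x y) (pd X2 v x y)).
Proof. unfold AH, inner, mulv, sum2, DpH_Dv, comp_Dv, grad; ring. Qed.

Theorem lemma2p1 (H : R -> R -> R) (U : R -> R -> Prop) (v : R -> R -> R) :
  smooth_on (fun _ _ => True) H -> convex2 H ->
  is_domain U -> smooth_on U v ->
  forall x y : R, U x y ->
    inner (mulv (hess H (pd X1 v x y) (pd X2 v x y)) (grad (comp_Dv H v) x y))
          (grad (comp_Dv H v) x y)
    - divergence (DpH_Dv H v) x y * AH H v x y
    = (- det2 (hess v x y)) *
      inner (mulv (adj2 (hess H (pd X1 v x y) (pd X2 v x y)))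
                  (grad H (pd X1 v x y) (pd X2 v x y)))
            (grad H (pd X1 v x y) (pd X2 v x y)).
Proof.
intros H_smooth _ [_ [U_open _]] v_smooth x y Uxy.
pose proof (smooth_on_locally_ex_diff_n U v 2 x y U_open v_smooth Uxy) as v_C2.
pose proof (smooth_on_locally_ex_diff_n _ H 2 (pd X1 v x y) (pd X2 v x y)
              open_true H_smooth I) as H_C2.
pose proof (smooth_on_locally_ex_diff_n _ H 3 (pd X1 v x y) (pd X2 v x y)
              open_true H_smooth I) as H_C3.
rewrite (grad_comp_Dv H v x y H_C2 v_C2), (divergence_DpH_Dv H v x y H_C3 v_C2), AH_eq_inner.
apply quadratic_form_identity, hess_sym, v_C2.
Qed.
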